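(* Let $d\in\mathbb{N}_0$, $\boldsymbol{c}=(c_1,\ldots,c_d)\in(\mathbb{N}\setminus\{2\})^d$ with $c_1\ge3$ (if $d\ge1$), and $\boldsymbol{z}=(z_0,\ldots,z_d)\in\mathbb{C}^{d+1}$ with $|z_j|<1$. Then $\lim_{n\to\infty}G_n(\boldsymbol{c};\boldsymbol{z})=G(\boldsymbol{c};\boldsymbol{z})$, and the convergence is uniform on every closed region $|z_0|\le u_0<1,\ldots,|z_d|\le u_d<1$.
   Context: $t^{\star}_n(\boldsymbol{s})=\sum_{n\geq k_1\geq\cdots\geq k_r\geq1}\prod_{j}(2k_j-1)^{-s_j}$ and $t^{\star}(\boldsymbol{s})=\sum_{k_1\geq\cdots\geq k_r\geq1}\prod_{j}(2k_j-1)^{-s_j}$ (for $s_1>1$), both equal to $1$ on the empty index. $\{2\}^a$ is $2$ repeated $a$ times. $G_n(\boldsymbol{c};\boldsymbol{z})=\sum_{a_0,\ldots,a_d\geq0}t^{\star}_n(\{2\}^{a_0},c_1,\ldots,c_d,\{2\}^{a_d})z_0^{2a_0}\cdots z_d^{2a_d}$ and $G(\boldsymbol{c};\boldsymbol{z})$ is the same with $t^\star$ in place of $t^\star_n$. *)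

From HB Require Import structures.
From mathcomp Require Import all_boot all_order all_algebra.
From mathcomp Require Import complex.
From mathcomp Require Import all_classical all_reals all_analysis.
Set Implicit Arguments. Unset Strict Implicit. Unset Printing Implicit Defensive.
Import Order.TTheory GRing.Theory Num.Theory.
Import numFieldNormedType.Exports.
Local Open Scope ring_scope.
Local Open Scope complex_scope.
Local Open Scope classical_set_scope.

Notation Cx R := (R[i])^o.

(* t*_n(s) = sum_{n >= k_1 >= ... >= k_r >= 1} prod_j (2 k_j - 1)^(-s_j),
   written recursively on the index s:
   t*_n(s_1 :: s') = sum_{k_1 = 1}^{n} (2 k_1 - 1)^(-s_1) t*_{k_1}(s'),
   and t*_n(empty) = 1. *)
Fixpoint tstarn (F : numFieldType) (n : nat) (s : seq nat) : F :=
  match s with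
  | [::] => 1
  | s1 :: s' =>
      \sum_(1 <= k < n.+1) ((2 * k - 1)%:R ^- s1) * tstarn F k s'
  end.

Definition tstar (R : realType) (s : seq nat) : Cx R :=
  lim ((tstarn R[i] n s : Cx R) @[n --> \oo]).

(* The index ({2}^{a_0}, c_1, {2}^{a_1}, ..., c_d, {2}^{a_d});
   c_{j+1} is  c j  for j : 'I_d, a_j is  a j  for j : 'I_d.+1. *)
Definition Gindex (d : nat) (c : 'I_d -> nat) (a : 'I_d.+1 -> nat) : seq nat :=
  nseq (a ord0) 2%N ++
  flatten [seq c j :: nseq (a (lift ord0 j)) 2%N | j <- enum 'I_d].

Definition zmono (R : realType) (d : nat) (z : 'I_d.+1 -> Cx R)
  (a : 'I_d.+1 -> nat) : Cx R :=
  \prod_(j < d.+1) z j ^+ (2 * a j).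

(* Sum over a_0,...,a_d >= 0 of the (d+1)-fold series, defined as the limit of
   the partial sums over the boxes 0 <= a_j < N. *)
Definition Gn (R : realType) (n d : nat) (c : 'I_d -> nat) (z : 'I_d.+1 -> Cx R)
  : Cx R :=
  lim ((\sum_(a : {ffun 'I_d.+1 -> 'I_N})
          (tstarn R[i] n (Gindex c (fun j => nat_of_ord (a j))) : Cx R)
          * zmono z (fun j => nat_of_ord (a j))) @[N --> \oo]).

Definition G (R : realType) (d : nat) (c : 'I_d -> nat) (z : 'I_d.+1 -> Cx R)
  : Cx R :=
  lim ((\sum_(a : {ffun 'I_d.+1 -> 'I_N})
          tstar R (Gindex c (fun j => nat_of_ord (a j)))
          * zmono z (fun j => nat_of_ord (a j))) @[N --> \oo]).

(* Write g_n = 2 - 1/(2n).  Since sum_{k<=n} g_k/(2k-1)^2 <= g_n, a block {2}^a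
   multiplies t*_n by at most 2; a letter c >= 1 preserves a bound of the form
   t*_k <= B k because k/(2k-1) <= 1; and the leading letter c_1 >= 3 turns such a
   bound into the constant 2B because sum 1/(2k-1)^2 <= 2.  Hence t*_n(index) <=
   2^(d+2) uniformly in n and a_0..a_d, so t*_n increases to t*, and every term of
   G_n and of G is dominated by 2^(d+2) prod_j |z_j|^(2 a_j).  Tannery's argument
   finishes: cut the series at a box [0,N)^(d+1) whose tail is small uniformly on
   |z_j| <= u_j < 1, then let n -> oo in the finitely many remaining terms. *)

Set Implicit Arguments.
Unset Strict Implicit.
Unset Printing Implicit Defensive.
From HB Require Import structures.
From mathcomp Require Import all_boot all_order all_algebra.
From mathcomp Require Import complex.
From mathcomp Require Import all_classical all_reals all_analysis.
From mathcomp Require Import lra zify ring.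
Import Order.TTheory GRing.Theory Num.Theory.
Import numFieldNormedType.Exports.
Local Open Scope ring_scope.
Local Open Scope complex_scope.
Local Open Scope classical_set_scope.

Lemma tstarn_ge0 (F : numFieldType) n s : 0 <= tstarn F n s.
Proof.
elim: s n => [|s1 s IH] n /=; first exact: ler01.
by apply: sumr_ge0 => k _; apply: mulr_ge0.
Qed.

Lemma tstarn_nondecreasing (F : numFieldType) s : {homo tstarn F ^~ s : n m / (n <= m)%N >-> n <= m}.
Proof.
case: s => [|s1 s] n m nm //=.
rewrite [X in _ <= X](big_cat_nat _ (n := n.+1)) //= lerDl.
by apply: sumr_ge0 => k _; apply: mulr_ge0; last exact: tstarn_ge0.
Qed.

Lemma tstarn_complex (R : rcfType) n s : tstarn R[i] n s = (tstarn R n s)%:C.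
Proof.
elim: s n => [|s1 s IH] n /=; first by rewrite rmorph1.
rewrite rmorph_sum; apply: eq_bigr => k _.
by rewrite rmorphM IH fmorphV rmorphXn rmorph_nat.
Qed.

Section tstarn_bound.
Variable R : realFieldType.

Definition inv_odd (k : nat) : R := (2 * k - 1)%:R^-1.

Lemma tstarn_cons n c s :
  tstarn R n (c :: s) = \sum_(1 <= k < n.+1) inv_odd k ^+ c * tstarn R k s.
Proof. by apply: eq_bigr => k _; rewrite /inv_odd exprVn. Qed.

Lemma inv_odd_ge0 k : 0 <= inv_odd k.
Proof. by rewrite invr_ge0. Qed.

Lemma inv_odd_le1 k : inv_odd k <= 1.
Proof.
rewrite /inv_odd; case: (posnP (2 * k - 1)) => [-> | k_gt0].
  by rewrite invr0.
by rewrite invf_le1 ?ltr0n // ler1n.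
Qed.

Lemma inv_odd_mul_le1 k : inv_odd k * k%:R <= 1.
Proof.
rewrite /inv_odd; case: (posnP k) => [-> | k_gt0]; first by rewrite mulr0.
by rewrite mulrC ler_pdivrMr ?ltr0n ?mul1r ?ler_nat; lia.
Qed.

Definition nseq2_bound (n : nat) : R := 2 - (2 * n)%:R^-1.

Lemma nseq2_bound_ge1 n : (1 <= n)%N -> 1 <= nseq2_bound n.
Proof.
move=> n_gt0; have : (2 * n)%:R^-1 <= 1 :> R by rewrite invf_le1 ?ltr0n ?ler1n; lia.
rewrite /nseq2_bound; lra.
Qed.

Lemma nseq2_bound_ge0 n : 0 <= nseq2_bound n.
Proof.
case: n => [|n]; first by rewrite /nseq2_bound muln0 invr0 subr0.
exact: le_trans ler01 (@nseq2_bound_ge1 n.+1 isT).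
Qed.

Lemma nseq2_bound_le2 n : nseq2_bound n <= 2.
Proof. by rewrite /nseq2_bound lerBlDr lerDl invr_ge0. Qed.

Lemma nseq2_bound_step n : (1 <= n)%N ->
  nseq2_bound n + inv_odd n.+1 ^+ 2 * 2 <= nseq2_bound n.+1.
Proof.
move=> n_gt0; rewrite /nseq2_bound /inv_odd.
have -> : (2 * n.+1 - 1 = 2 * n + 1)%N by lia.
have -> : (2 * n.+1 = 2 * n + 2)%N by lia.
rewrite !(natrM, natrD).
set r : R := n%:R.
have : 1 <= r by rewrite ler1n.
clearbody r => r_ge1; rewrite -subr_ge0.
have -> : 2 - (2 * r + 2)^-1 - (2 - (2 * r)^-1 + (2 * r + 1)^-1 ^+ 2 * 2)
    = 2 / (2 * r * (2 * r + 2) * (2 * r + 1) ^+ 2).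
  by field; apply/and3P; split; apply: lt0r_neq0; lra.
by apply: divr_ge0 => //; apply: mulr_ge0; [apply: mulr_ge0; lra | exact: sqr_ge0].
Qed.

Lemma sum_inv_odd_sqr_le n : (1 <= n)%N ->
  \sum_(1 <= k < n.+1) inv_odd k ^+ 2 * nseq2_bound k <= nseq2_bound n.
Proof.
elim: n => [//|[|n] IH] _.
  by rewrite big_nat1 /inv_odd invr1 expr1n mul1r.
rewrite big_nat_recr //=; apply: le_trans (@nseq2_bound_step n.+1 _) => //.
apply: lerD; first exact: IH.
by apply: ler_wpM2l; [apply: exprn_ge0; exact: inv_odd_ge0 | exact: nseq2_bound_le2].
Qed.

Lemma sum_inv_odd_sqr_le2 n : \sum_(1 <= k < n.+1) inv_odd k ^+ 2 <= 2.
Proof.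
case: n => [|n]; first by rewrite big_geq.
apply: le_trans (nseq2_bound_le2 n.+1); apply: le_trans (@sum_inv_odd_sqr_le n.+1 _) => //.
apply: ler_sum_nat => k /andP[k_gt0 _].
by apply: ler_peMr; [apply: exprn_ge0; exact: inv_odd_ge0 | exact: nseq2_bound_ge1].
Qed.

Lemma tstarn_nseq2_le n a s : (1 <= n)%N ->
  tstarn R n (nseq a 2%N ++ s) <= nseq2_bound n * tstarn R n s.
Proof.
elim: a n => [|a IH] n n_gt0.
  by apply: ler_peMl; [exact: tstarn_ge0 | exact: nseq2_bound_ge1].
rewrite (tstarn_cons n 2 (nseq a 2%N ++ s)); apply: (@le_trans _ _
  (\sum_(1 <= k < n.+1) (inv_odd k ^+ 2 * nseq2_bound k) * tstarn R n s)).
  apply: ler_sum_nat => k /andP[k_gt0 k_le_n]; rewrite -mulrA.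
  apply: ler_wpM2l; first by apply: exprn_ge0; exact: inv_odd_ge0.
  apply: le_trans (IH k k_gt0) _; apply: ler_wpM2l; first exact: nseq2_bound_ge0.
  exact: tstarn_nondecreasing.
rewrite -mulr_suml; apply: ler_wpM2r; first exact: tstarn_ge0.
exact: sum_inv_odd_sqr_le.
Qed.

Lemma tstarn_nseq2_le2 n a s : tstarn R n (nseq a 2%N ++ s) <= 2 * tstarn R n s.
Proof.
case: n => [|n]; last first.
  apply: le_trans (@tstarn_nseq2_le n.+1 a s isT) _.
  by apply: ler_wpM2r; [exact: tstarn_ge0 | exact: nseq2_bound_le2].
case: a => [|a] /=; last by rewrite big_geq // mulr_ge0 ?tstarn_ge0.
by rewrite ler_peMl ?tstarn_ge0 ?ler1n.
Qed.

Lemma tstarn_cons_le c s B : (0 < c)%N ->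
  (forall i, (1 <= i)%N -> tstarn R i s <= B * i%:R) ->
  forall n, tstarn R n (c :: s) <= B * n%:R.
Proof.
move=> c_gt0 hs n; rewrite tstarn_cons.
apply: le_trans (_ : \sum_(1 <= i < n.+1) B <= _); last first.
  by rewrite sumr_const_nat subn1 mulr_natr.
apply: ler_sum_nat => i /andP[i_gt0 _].
have x_ge0 := inv_odd_ge0 i.
have B_ge0 : 0 <= B.
  by have := hs 1%N isT; rewrite mulr1; apply: le_trans; exact: tstarn_ge0.
apply: le_trans (_ : inv_odd i * (B * i%:R) <= _).
  apply: ler_pM; [exact: exprn_ge0 | exact: tstarn_ge0 | | exact: hs].
  by rewrite -[leRHS]expr1; apply: ler_wiXn2l => //; exact: inv_odd_le1.
by rewrite mulrCA ler_piMr // inv_odd_mul_le1.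
Qed.

Lemma tstarn_cons_ge3_le c s B : (3 <= c)%N ->
  (forall i, (1 <= i)%N -> tstarn R i s <= B * i%:R) ->
  forall n, tstarn R n (c :: s) <= 2 * B.
Proof.
move=> c_ge3 hs n; rewrite tstarn_cons.
have B_ge0 : 0 <= B.
  by have := hs 1%N isT; rewrite mulr1; apply: le_trans; exact: tstarn_ge0.
apply: le_trans (_ : \sum_(1 <= i < n.+1) inv_odd i ^+ 2 * B <= _); last first.
  by rewrite -mulr_suml ler_wpM2r // sum_inv_odd_sqr_le2.
apply: ler_sum_nat => i /andP[i_gt0 _].
have x_ge0 := inv_odd_ge0 i.
apply: le_trans (_ : inv_odd i ^+ 2 * inv_odd i * (B * i%:R) <= _).
  apply: ler_pM; [exact: exprn_ge0 | exact: tstarn_ge0 | | exact: hs].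
  by rewrite -exprSr; apply: ler_wiXn2l => //; exact: inv_odd_le1.
rewrite -mulrA ler_wpM2l ?exprn_ge0 //.
by rewrite mulrCA ler_piMr // inv_odd_mul_le1.
Qed.

End tstarn_bound.

Definition blocks (cs : seq (nat * nat)) : seq nat :=
  flatten [seq p.1 :: nseq p.2 2%N | p <- cs].

Lemma blocks_cons p cs : blocks (p :: cs) = p.1 :: nseq p.2 2%N ++ blocks cs.
Proof. by []. Qed.

Lemma Gindex_blocks d (c : 'I_d -> nat) a : Gindex c a =
  nseq (a ord0) 2%N ++ blocks [seq (c j, a (lift ord0 j)) | j <- enum 'I_d].
Proof. by rewrite /Gindex /blocks -map_comp. Qed.

Lemma tstarn_nseq2_blocks_le (R : realFieldType) a cs :
  all (fun p => 0 < p.1)%N cs -> forall k, (1 <= k)%N ->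
  tstarn R k (nseq a 2%N ++ blocks cs) <= 2 ^+ (size cs).+1 * k%:R.
Proof.
elim: cs a => [|[c0 a0] cs IH] a /=.
  move=> _ k k_gt0; apply: le_trans (tstarn_nseq2_le2 _ _ _ _) _.
  by rewrite mulr1 expr1 ler_peMr ?ler1n.
move=> /andP[c0_gt0 cs_pos] k k_gt0.
apply: le_trans (tstarn_nseq2_le2 _ _ _ _) _.
rewrite exprS -mulrA ler_pM2l //.
exact: tstarn_cons_le c0_gt0 (IH _ cs_pos) k.
Qed.

Lemma tstarn_Gindex_le (R : realFieldType) d (c : 'I_d -> nat)
    (hc : forall j, (0 < c j)%N) (hc0 : forall j : 'I_d, j = 0%N :> nat -> (3 <= c j)%N)
    n a :
  tstarn R n (Gindex c a) <= 2 ^+ d.+2.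
Proof.
rewrite Gindex_blocks; apply: le_trans (tstarn_nseq2_le2 _ _ _ _) _.
case: d c hc hc0 a => [|d] c hc hc0 a.
  by rewrite enum_ord0 /= expr2; lra.
rewrite enum_ordSl map_cons -map_comp.
set cs := map _ _.
rewrite blocks_cons.
have cs_pos : all (fun p => 0 < p.1)%N cs by apply/allP => p /mapP[j _ ->]; exact: hc.
have size_cs : size cs = d by rewrite size_map size_enum_ord.
have rest_le a' := @tstarn_nseq2_blocks_le R a' _ cs_pos; rewrite size_cs in rest_le.
rewrite [X in _ <= X]exprS ler_pM2l // exprS.
exact: tstarn_cons_ge3_le (hc0 ord0 erefl) (rest_le _) n.
Qed.

Section complex_limits.
Variable R : realType.
Implicit Types (x : R) (z : R[i]).

Lemma normc_real_complex x : `|x%:C| = `|x|%:C.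
Proof. by rewrite normc_def /= expr0n /= addr0 sqrtr_sqr. Qed.

Lemma gt0_real_complex z : 0 < z -> z = (complex.Re z)%:C /\ 0 < complex.Re z.
Proof. by case: z => x y; rewrite ltcE /= => /andP[/eqP -> x_gt0]. Qed.

Lemma normc_ge_Im z : `|complex.Im z|%:C <= `|z|.
Proof.
rewrite normc_def lecR -sqrtr_sqr ler_sqrt ?addr_ge0 ?sqr_ge0 //.
by rewrite lerDr sqr_ge0.
Qed.

Lemma normc_le_ReIm z : `|z| <= (`|complex.Re z| + `|complex.Im z|)%:C.
Proof.
rewrite normc_def lecR -[leRHS]ger0_norm ?addr_ge0 // -sqrtr_sqr.
rewrite ler_sqrt ?sqr_ge0 // sqrrD !real_normK ?num_real // lerD2r lerDl.
by rewrite mulrn_wge0 // mulr_ge0.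
Qed.

Lemma cvg_real_complex (v : R ^nat) (l : R) :
  v n @[n --> \oo] --> l -> ((v n)%:C : Cx R) @[n --> \oo] --> (l%:C : Cx R).
Proof.
move=> /cvgrPdist_lt v_cvg; apply/cvgrPdist_lt => e /gt0_real_complex[-> e_gt0].
by apply: filterS (v_cvg _ e_gt0) => n; rewrite -rmorphB normc_real_complex ltcR.
Qed.

Lemma cvg_proj_of_cauchy (p : R[i] -> R) (s : nat -> Cx R) (B : R ^nat) :
  (forall z z', p (z - z') = p z - p z') -> (forall z, `|p z|%:C <= `|z|) ->
  (forall N M, (N <= M)%N -> `|s M - s N| <= (B N)%:C) -> B n @[n --> \oo] --> 0 ->
  cvg (p (s n) @[n --> \oo]).
Proof.
move=> pB p_le s_cauchy /cvgrPdist_lt B_cvg.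
apply/cauchy_cvgP/cauchy_exP => e e_gt0.
have [N /= BN_lt] := filter_ex (B_cvg e e_gt0); exists (p (s N)).
apply: filterS (nbhs_infty_ge N) => M le_NM /=.
rewrite -ball_normE /= distrC -pB -ltcR.
apply: le_lt_trans (le_trans (p_le _) (s_cauchy _ _ le_NM)) _.
by rewrite ltcR; apply: le_lt_trans BN_lt; rewrite sub0r normrN ler_norm.
Qed.

Lemma cauchy_cvgC (s : nat -> Cx R) (B : R ^nat) :
  (forall N M, (N <= M)%N -> `|s M - s N| <= (B N)%:C) -> B n @[n --> \oo] --> 0 ->
  cvg (s n @[n --> \oo]).
Proof.
move=> s_cauchy B_cvg.
have /cvgrPdist_lt Re_cvg :=
  cvg_proj_of_cauchy (raddfB (@complex.Re R)) (@normc_ge_Re R) s_cauchy B_cvg.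
have /cvgrPdist_lt Im_cvg :=
  cvg_proj_of_cauchy (raddfB (@complex.Im R)) normc_ge_Im s_cauchy B_cvg.
apply/cvg_ex; exists (lim (complex.Re (s n) @[n --> \oo]) +i* lim (complex.Im (s n) @[n --> \oo])).
apply/cvgrPdist_lt => e /gt0_real_complex[-> e_gt0].
have e2_gt0 : 0 < complex.Re e / 2 by exact: divr_gt0.
apply: filterS (filterI (Re_cvg _ e2_gt0) (Im_cvg _ e2_gt0)) => n [Re_lt Im_lt].
apply: le_lt_trans (normc_le_ReIm _) _; rewrite ltcR.
have -> : complex.Re e = complex.Re e / 2 + complex.Re e / 2 by rewrite -splitr.
by apply: ltrD; [move: Re_lt | move: Im_lt]; rewrite raddfB.
Qed.

End complex_limits.

Definition tstar_real (R : realType) (s : seq nat) : R := lim (tstarn R n s @[n --> \oo]).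

Section tstar_bounded.
Variables (R : realType) (s : seq nat) (K : R).
Hypothesis tstarn_le : forall n, tstarn R n s <= K.

Lemma tstarn_cvg : cvg (tstarn R n s @[n --> \oo]).
Proof.
apply: nondecreasing_is_cvgn; first exact: tstarn_nondecreasing.
by exists K => _ [n _ <-].
Qed.

Lemma tstarn_le_tstar_real n : tstarn R n s <= tstar_real R s.
Proof. exact: nondecreasing_cvgn_le (@tstarn_nondecreasing R s) tstarn_cvg n. Qed.

Lemma tstar_real_le : tstar_real R s <= K.
Proof. by apply: limr_le tstarn_cvg _; apply: nearW. Qed.

Lemma tstar_real_subn_cvg0 : tstar_real R s - tstarn R n s @[n --> \oo] --> 0.
Proof. by rewrite -(subrr (tstar_real R s)); exact: cvgB (cvg_cst _) tstarn_cvg. Qed.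

Lemma tstar_real_complex : tstar R s = (tstar_real R s)%:C.
Proof.
rewrite /tstar (_ : (fun n => _) = fun n => ((tstarn R n s)%:C : Cx R)).
  by apply: cvg_lim; [exact: norm_hausdorff | exact/cvg_real_complex/tstarn_cvg].
by apply: funext => n; rewrite tstarn_complex.
Qed.

End tstar_bounded.

Definition box {V : zmodType} (d N : nat) (h : ('I_d.+1 -> nat) -> V) : V :=
  \sum_(a : {ffun 'I_d.+1 -> 'I_N}) h (fun j => nat_of_ord (a j)).
Arguments box {V d} N h.

Lemma box_split {V : zmodType} {d N M : nat} (h : ('I_d.+1 -> nat) -> V) : (N <= M)%N ->
  box M h = box N h +
    \sum_(a : {ffun 'I_d.+1 -> 'I_M} | ~~ [forall j, (a j < N)%N]) h (fun j => nat_of_ord (a j)).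
Proof.
move=> le_NM; rewrite /box (bigID (fun a : {ffun _ -> 'I_M} => [forall j, (a j < N)%N])) /=.
congr (_ + _); case: N le_NM => [|N] le_NM.
  rewrite big1 => [|a /forallP /(_ ord0)] //.
  by rewrite big1 // => a _; case: (a ord0).
pose widen (b : {ffun 'I_d.+1 -> 'I_N.+1}) := [ffun j => widen_ord le_NM (b j)].
rewrite (reindex widen).
  apply: eq_big => [b | b _]; first by apply/forallP => j; rewrite ffunE /=.
  by congr h; apply: funext => j; rewrite ffunE.
exists (fun a : {ffun 'I_d.+1 -> 'I_M} => [ffun j => inord (a j) : 'I_N.+1]).
  by move=> b _; apply/ffunP => j; rewrite !ffunE; apply/val_inj; rewrite /= inordK.
move=> a; rewrite inE => /forallP a_lt; apply/ffunP => j; rewrite !ffunE.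
by apply/val_inj; rewrite /= inordK.
Qed.

Lemma box_sub {V : zmodType} {d N M : nat} (h : ('I_d.+1 -> nat) -> V) : (N <= M)%N ->
  box M h - box N h =
    \sum_(a : {ffun 'I_d.+1 -> 'I_M} | ~~ [forall j, (a j < N)%N]) h (fun j => nat_of_ord (a j)).
Proof. by move=> le_NM; rewrite (box_split h le_NM) addrAC subrr add0r. Qed.

Section dominated_box.
Variables (R : realType) (d : nat) (w : ('I_d.+1 -> nat) -> R) (W : R).
Hypotheses (w_ge0 : forall a, 0 <= w a) (box_w_le : forall N, box N w <= W).

Lemma box_nondecreasing : {homo (fun N => box N w) : N M / (N <= M)%N >-> N <= M}.
Proof.
by move=> N M le_NM; rewrite -subr_ge0 box_sub //; apply: sumr_ge0 => a _.
Qed.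

Lemma box_cvg : cvg (box N w @[N --> \oo]).
Proof.
by apply: nondecreasing_is_cvgn; [exact: box_nondecreasing | exists W => _ [N _ <-]].
Qed.

Definition box_tail N := lim (box M w @[M --> \oo]) - box N w.

Lemma box_tail_cvg0 : box_tail N @[N --> \oo] --> 0.
Proof.
rewrite -(subrr (lim (box M w @[M --> \oo]))).
exact: cvgB (cvg_cst _) box_cvg.
Qed.

Lemma box_le_lim N : box N w <= lim (box M w @[M --> \oo]).
Proof. exact: nondecreasing_cvgn_le box_nondecreasing box_cvg N. Qed.

Section dominated.
Variable f : ('I_d.+1 -> nat) -> Cx R.
Hypothesis f_le : forall a, `|f a| <= (w a)%:C.

Lemma box_dominated_dist {N M : nat} : (N <= M)%N ->
  `|box M f - box N f| <= (box M w - box N w)%:C.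
Proof.
move=> le_NM; rewrite !box_sub // rmorph_sum.
by apply: le_trans (ler_norm_sum _ _ _) _; apply: ler_sum => a _.
Qed.

Lemma box_dominated_cvg : cvg (box N f @[N --> \oo]).
Proof.
apply: (@cauchy_cvgC R (box ^~ f) box_tail _ box_tail_cvg0) => N M le_NM /=.
apply: le_trans (box_dominated_dist le_NM) _.
by rewrite lecR lerD2r box_le_lim.
Qed.

Lemma lim_box_dominated_dist N :
  `|lim (box M f @[M --> \oo]) - box N f| <= (box_tail N)%:C.
Proof.
apply/ler_addgt0Pr => e e_gt0.
have /cvgrPdist_lt/(_ e e_gt0) near_lim := box_dominated_cvg.
have [M [le_NM M_near]] := filter_ex (filterI (nbhs_infty_ge N) near_lim).
rewrite -(subrK (box M f) (lim _)) -addrA addrC.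
apply: le_trans (ler_normD _ _) _; apply: lerD; last exact: ltW.
apply: le_trans (box_dominated_dist le_NM) _.
by rewrite lecR lerD2r box_le_lim.
Qed.

End dominated.

Lemma lim_box_dominated_sub (f g : ('I_d.+1 -> nat) -> Cx R) N :
  (forall a, `|f a| <= (w a)%:C) -> (forall a, `|g a| <= (w a)%:C) ->
  `|lim (box M f @[M --> \oo]) - lim (box M g @[M --> \oo])| <=
    (box_tail N + box_tail N)%:C + `|box N f - box N g|.
Proof.
move=> f_le g_le; rewrite rmorphD.
have -> : lim (box M f @[M --> \oo]) - lim (box M g @[M --> \oo]) =
  (lim (box M f @[M --> \oo]) - box N f) + (box N g - lim (box M g @[M --> \oo]))
  + (box N f - box N g) by ring.
apply: le_trans (ler_normD _ _) _; apply: lerD => //.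
apply: le_trans (ler_normD _ _) _; apply: lerD; first exact: lim_box_dominated_dist.
by rewrite distrC; exact: lim_box_dominated_dist.
Qed.

End dominated_box.

Definition geo_weight {R : pzSemiRingType} (d : nat) (q : R) (a : 'I_d.+1 -> nat) : R :=
  \prod_(j < d.+1) q ^+ a j.
Arguments geo_weight {R} d q a.

Lemma box_geo_weight (R : comPzRingType) d N (q : R) :
  box N (geo_weight d q) = (\sum_(i < N) q ^+ i) ^+ d.+1.
Proof.
rewrite /box -(bigA_distr_bigA (fun (_ : 'I_d.+1) (i : 'I_N) => q ^+ i)) /=.
by rewrite prodr_const card_ord.
Qed.

Section geo_weight_bounds.
Variables (R : realFieldType) (q : R).
Hypotheses (q_ge0 : 0 <= q) (q_lt1 : q < 1).

Lemma sum_expr_le N : \sum_(i < N) q ^+ i <= (1 - q)^-1.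
Proof.
have q1_gt0 : 0 < 1 - q by rewrite subr_gt0.
rewrite -(ler_pM2l q1_gt0) mulfV ?gt_eqF // -opprB mulNr -subrX1 opprB.
by rewrite gerBl exprn_ge0.
Qed.

Lemma box_geo_weight_le d N : box N (geo_weight d q) <= (1 - q)^-1 ^+ d.+1.
Proof.
rewrite box_geo_weight lerXn2r ?nnegrE ?sum_expr_le //.
  by apply: sumr_ge0 => i _; exact: exprn_ge0.
by rewrite invr_ge0 subr_ge0 ltW.
Qed.

Lemma geo_weight_ge0 d a : 0 <= geo_weight d q a.
Proof. by apply: prodr_ge0 => j _; exact: exprn_ge0. Qed.

Lemma geo_weight_le1 d a : geo_weight d q a <= 1.
Proof.
by apply: prodr_ile1 => j _; rewrite exprn_ge0 //= exprn_ile1 // ltW.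
Qed.

End geo_weight_bounds.

Lemma zmono_le (R : realType) d (z : 'I_d.+1 -> Cx R) (v : R) a :
  0 <= v -> (forall j, `|z j| <= v%:C) -> `|zmono z a| <= (geo_weight d (v ^+ 2) a)%:C.
Proof.
move=> v_ge0 z_le; rewrite /zmono normr_prod rmorph_prod.
apply: ler_prod => j _; rewrite normr_ge0 normrX !rmorphXn -exprM.
by apply: lerXn2r; rewrite ?nnegrE ?normr_ge0 ?ler0c.
Qed.

Section G_convergence.
Variables (R : realType) (d : nat) (c : 'I_d -> nat).
Hypotheses (c_gt0 : forall j, (0 < c j)%N)
  (c0_ge3 : forall j : 'I_d, j = 0%N :> nat -> (3 <= c j)%N).

Let tstarn_G_le := tstarn_Gindex_le R c_gt0 c0_ge3.

Definition Gn_term n (z : 'I_d.+1 -> Cx R) a : Cx R :=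
  (tstarn R[i] n (Gindex c a) : Cx R) * zmono z a.

Definition G_term (z : 'I_d.+1 -> Cx R) a : Cx R := tstar R (Gindex c a) * zmono z a.

Lemma Gn_box n z : Gn n c z = lim (box N (Gn_term n z) @[N --> \oo]).
Proof. by []. Qed.

Lemma G_box z : G c z = lim (box N (G_term z) @[N --> \oo]).
Proof. by []. Qed.

Lemma box_gap_cvg0 N :
  box N (fun a => tstar_real R (Gindex c a) - tstarn R n (Gindex c a) : R)
    @[n --> \oo] --> 0.
Proof.
rewrite -(big1_eq (op := +%R) (index_enum {ffun 'I_d.+1 -> 'I_N}) xpredT).
apply: cvg_big => [|a _]; first exact: add_continuous.
exact: tstar_real_subn_cvg0 (tstarn_G_le ^~ _).
Qed.

Section radius.
Variable v : R.
Hypotheses (v_ge0 : 0 <= v) (v_lt1 : v < 1).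

Let q_ge0 : 0 <= v ^+ 2. Proof. exact: exprn_ge0. Qed.
Let q_lt1 : v ^+ 2 < 1. Proof. by rewrite expr_lt1. Qed.

Let w a : R := 2 ^+ d.+2 * geo_weight d (v ^+ 2) a.

Let w_ge0 a : 0 <= w a.
Proof. by rewrite mulr_ge0 ?exprn_ge0 ?geo_weight_ge0. Qed.

Let box_w_le N : box N w <= 2 ^+ d.+2 * (1 - v ^+ 2)^-1 ^+ d.+1.
Proof.
by rewrite /box -mulr_sumr ler_wpM2l ?exprn_ge0 // (box_geo_weight_le q_ge0 q_lt1).
Qed.

Lemma Gn_term_le n z : (forall j, `|z j| <= v%:C) -> forall a, `|Gn_term n z a| <= (w a)%:C.
Proof.
move=> z_le a; rewrite normrM tstarn_complex normc_real_complex.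
rewrite (ger0_norm (tstarn_ge0 _ _ _)).
apply: le_trans (ler_wpM2l _ (zmono_le _ v_ge0 z_le)) _; first by rewrite ler0c tstarn_ge0.
by rewrite -rmorphM lecR ler_wpM2r ?geo_weight_ge0 ?tstarn_G_le.
Qed.

Lemma G_term_le z : (forall j, `|z j| <= v%:C) -> forall a, `|G_term z a| <= (w a)%:C.
Proof.
move=> z_le a; rewrite normrM (tstar_real_complex (tstarn_G_le ^~ _)) normc_real_complex.
have tstar_ge0 : 0 <= tstar_real R (Gindex c a).
  exact: le_trans (tstarn_ge0 _ 0 _) (tstarn_le_tstar_real (tstarn_G_le ^~ _) _).
rewrite (ger0_norm tstar_ge0).
apply: le_trans (ler_wpM2l _ (zmono_le _ v_ge0 z_le)) _; first by rewrite ler0c.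
by rewrite -rmorphM lecR ler_wpM2r ?geo_weight_ge0 ?(tstar_real_le (tstarn_G_le ^~ _)).
Qed.

Lemma Gn_term_box_dist n z N : (forall j, `|z j| <= v%:C) ->
  `|box N (Gn_term n z) - box N (G_term z)| <=
    (box N (fun a => tstar_real R (Gindex c a) - tstarn R n (Gindex c a)))%:C.
Proof.
move=> z_le; rewrite /box -sumrB rmorph_sum.
apply: le_trans (ler_norm_sum _ _ _) _; apply: ler_sum => a _.
set s := Gindex c _; rewrite /Gn_term /G_term -mulrBl normrM.
have gap_ge0 : 0 <= tstar_real R s - tstarn R n s.
  by rewrite subr_ge0; exact: tstarn_le_tstar_real (tstarn_G_le ^~ _) _.
have gap_eq : `|(tstarn R[i] n s : Cx R) - tstar R s| = (tstar_real R s - tstarn R n s)%:C.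
  rewrite tstarn_complex (tstar_real_complex (tstarn_G_le ^~ _)) -rmorphB.
  by rewrite normc_real_complex distrC ger0_norm.
have zmono_le1 : `|zmono z (fun j => a j)| <= 1.
  apply: le_trans (zmono_le _ v_ge0 z_le) _.
  by rewrite -(rmorph1 (real_complex R)) lecR geo_weight_le1 // ltW.
by rewrite gap_eq -[leRHS]mulr1 ler_wpM2l // ler0c.
Qed.

Lemma Gn_cvg_uniform eps : 0 < eps ->
  \forall n \near \oo, forall z : 'I_d.+1 -> Cx R,
    (forall j, `|z j| <= v%:C) -> `|Gn n c z - G c z| < eps%:C.
Proof.
move=> eps_gt0.
have [eps4_gt0 eps2_gt0] : 0 < eps / 4 /\ 0 < eps / 2 by split; exact: divr_gt0.
have /cvgrPdist_lt/(_ _ eps4_gt0)/filter_ex[N /=] := box_tail_cvg0 w_ge0 box_w_le.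
rewrite sub0r normrN ger0_norm => [tail_lt|]; last first.
  by rewrite subr_ge0 (box_le_lim w_ge0 box_w_le).
have /cvgrPdist_lt/(_ _ eps2_gt0) := box_gap_cvg0 N.
apply: filterS => n; rewrite sub0r normrN => gap_lt z z_le.
rewrite Gn_box G_box.
apply: le_lt_trans (lim_box_dominated_sub w_ge0 box_w_le N (Gn_term_le n z_le) (G_term_le z_le)) _.
apply: le_lt_trans (lerD (lexx _) (Gn_term_box_dist n N z_le)) _.
rewrite -rmorphD ltcR.
have := ler_norm (box N (fun a => tstar_real R (Gindex c a) - tstarn R n (Gindex c a))).
lra.
Qed.

End radius.

Lemma Gn_cvg_uniform_polydisc (u : 'I_d.+1 -> R) : (forall j, 0 <= u j < 1) ->
  forall eps, 0 < eps -> \forall n \near \oo, forall z : 'I_d.+1 -> Cx R,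
    (forall j, `|z j| <= (u j)%:C) -> `|Gn n c z - G c z| < eps%:C.
Proof.
move=> u_01 eps eps_gt0; pose v := \big[Num.max/0]_j u j.
have v_ge0 : 0 <= v by apply: le_trans (le_bigmax _ _ ord0); case/andP: (u_01 ord0).
have v_lt1 : v < 1 by apply: bigmax_lt => // j _; case/andP: (u_01 j).
apply: filterS (Gn_cvg_uniform v_ge0 v_lt1 eps_gt0) => n near_n z z_le.
by apply: near_n => j; apply: le_trans (z_le j) _; rewrite lecR le_bigmax.
Qed.

End G_convergence.

Theorem lemma3p5 (R : realType) (d : nat) (c : 'I_d -> nat)
  (hc : forall j : 'I_d, (0 < c j)%N /\ c j <> 2%N)
  (hc1 : forall j : 'I_d, nat_of_ord j = 0%N -> (3 <= c j)%N) :
  (forall z : 'I_d.+1 -> Cx R, (forall j, `|z j| < 1) ->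
     Gn n c z @[n --> \oo] --> G c z) /\
  (forall u : 'I_d.+1 -> R, (forall j, 0 <= u j < 1) ->
     forall eps : R, 0 < eps ->
       \forall n \near \oo, forall z : 'I_d.+1 -> Cx R,
         (forall j, `|z j| <= (u j)%:C) -> `|Gn n c z - G c z| < eps%:C).
Proof.
have c_gt0 j : (0 < c j)%N := (hc j).1.
split=> [z z_lt1 | ]; last exact: Gn_cvg_uniform_polydisc c_gt0 hc1.
pose u j := complex.Re `|z j|.
have normzE j : `|z j| = (u j)%:C by rewrite /u RRe_real ?normr_real.
have u_01 j : 0 <= u j < 1 by rewrite -ler0c -ltcR -normzE normr_ge0 z_lt1.
apply/cvgrPdist_lt => e /gt0_real_complex[-> e_gt0].
apply: filterS (Gn_cvg_uniform_polydisc c_gt0 hc1 u_01 e_gt0) => n near_n; rewrite distrC.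
by apply: near_n => j; rewrite normzE.
Qed.
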